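(* Let $n\ge3$, let $[\mathcal H:\partial]$, $[\mathcal G:\delta]$ be reduced $n$-crossed complexes and $([\mathcal E:\eta],p,f,\alpha,\beta)$ an $n$-butterfly from $\mathcal H$ to $\mathcal G$. If $[\mathcal Q:\xi]$ is a cofibrant replacement of $\mathcal H$ via a trivial fibration $q:\mathcal Q\to\mathcal H$, then there exists a weak equivalence $l:\mathcal Q\to\mathcal E^*$ with $p^*\circ l=q$.
   Context: A reduced $m$-crossed complex $[C:\partial]$ is a sequence of groups and homomorphisms $C_m\xrightarrow{\partial_m}\cdots\xrightarrow{\partial_2}C_1$ with an action of $C_1$ on each $C_k$ ($k\ge2$), such that $\partial_2$ is a crossed module, $C_k$ is abelian for $k\ge3$, each $\partial_k$ is $C_1$-equivariant, $\partial_{k-1}\partial_k$ is trivial, and $\partial_2(C_2)$ acts trivially on $C_k$ for $k\ge3$; morphisms commute with differentials and actions. $C_{\le m-1}$ is the truncation dropping degree $m$. The category of reduced $n$-crossed complexes carries a model structure in which weak equivalences are morphisms inducing isomorphisms on $\pi_1=C_1/\operatorname{im}\partial_2$, $\pi_k=\ker\partial_k/\operatorname{im}\partial_{k+1}$ ($2\le k\le n-1$), $\pi_n=\ker\partial_n$, and fibrations are degreewise surjections; cofibrant objects are those with the left lifting property against trivial fibrations, and a cofibrant replacement of $\mathcal H$ is a cofibrant $\mathcal Q$ with a trivial fibration $\mathcal Q\to\mathcal H$. An $n$-butterfly $([\mathcal E:\eta],p,f,\alpha,\beta)$ from $[\mathcal H:\partial]$ to $[\mathcal G:\delta]$ consists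 of a reduced $(n-1)$-crossed complex $[\mathcal E:\eta]$, morphisms $p:\mathcal E\to\mathcal H_{\le n-1}$, $f:\mathcal E\to\mathcal G_{\le n-1}$, and homomorphisms $\alpha:\mathcal H_n\to\mathcal E_{n-1}$, $\beta:\mathcal G_n\to\mathcal E_{n-1}$ with $p_{n-1}\alpha=\partial_n$, $f_{n-1}\beta=\delta_n$, such that: (B2) $1\to\mathcal G_n\xrightarrow{\beta}\mathcal E_{n-1}\xrightarrow{u_{n-1}}\ker\eta_{n-2}\times_{\ker\partial_{n-2}}\mathcal H_{n-1}\to1$ is exact and $u_k:\mathcal E_k\to\ker\eta_{k-1}\times_{\ker\partial_{k-1}}\mathcal H_k$ is surjective for $k\le n-2$, where $u_k(x)=(\eta_k(x),p_k(x))$, the target being the fibre product of $p_{k-1}:\ker\eta_{k-1}\to\ker\partial_{k-1}$ and $\partial_k$ (conventions $\ker\eta_0=\ker\partial_0=1$, $\ker\eta_1=\mathcal E_1$, $\ker\partial_1=\mathcal H_1$); (B3) $\eta_{n-1}\circ(\alpha\times\beta)$ and $f_{n-1}\circ\alpha$ are trivial, $(\alpha\times\beta)(x,y)=\alpha(x)\beta(y)$; (B4) $\alpha(x^{p_1(a)})=\alpha(x)^a$, $\beta(y^{f_1(a)})=\beta(y)^a$ for $a\in\mathcal E_1$. Then $[\mathcal E^*:\eta^*]$: $\mathcal H_n\times\mathcal G_n\xrightarrow{\alpha\times\beta}\mathcal E_{n-1}\xrightarrow{\eta_{n-1}}\cdots\to\mathcal E_1$ is a reduced $n$-crossed complex and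 $p^*:\mathcal E^*\to\mathcal H$ is the projection in degree $n$ and $p$ below. *)

From mathcomp Require Import all_boot.

Unset Printing Implicit Defensive.

Record group := Group {
  gcar :> Type;
  gmul : gcar -> gcar -> gcar;
  gone : gcar;
  ginv : gcar -> gcar;
  gmulA : forall x y z, gmul x (gmul y z) = gmul (gmul x y) z;
  gmul1g : forall x, gmul gone x = x;
  gmulVg : forall x, gmul (ginv x) x = gone }.

Arguments gmul {g} x y.
Arguments gone {g}.
Arguments ginv {g} x.

Infix "*g" := gmul (at level 40, left associativity).

Definition hom {A B : group} (h : A -> B) : Prop :=
  forall x y, h (x *g y) = h x *g h y.

Definition prodg_mul {A B : group} (x y : (A * B)%type) : (A * B)%type :=
  (x.1 *g y.1, x.2 *g y.2).

Lemma prodg_mulA (A B : group) (x y z : (A * B)%type) :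
  prodg_mul x (prodg_mul y z) = prodg_mul (prodg_mul x y) z.
Proof. by rewrite /prodg_mul /= !gmulA. Qed.

Lemma prodg_mul1 (A B : group) (x : (A * B)%type) :
  prodg_mul (gone, gone) x = x.
Proof. by case: x => a b; rewrite /prodg_mul /= !gmul1g. Qed.

Lemma prodg_mulV (A B : group) (x : (A * B)%type) :
  prodg_mul (ginv x.1, ginv x.2) x = (gone, gone).
Proof. by case: x => a b; rewrite /prodg_mul /= !gmulVg. Qed.

Definition prodg (A B : group) : group :=
  @Group (A * B)%type (@prodg_mul A B) (gone, gone)
         (fun x => (ginv x.1, ginv x.2))
         (@prodg_mulA A B) (@prodg_mul1 A B) (@prodg_mulV A B).

(*   CC k      = the group C_k (only degrees 1 <= k <= n matter)       *)
(*   dd k      = the differential  partial_{k+1} : C_{k+1} -> C_k      *)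
(*   act k x a = the right action x^a of a in C_1 on x in C_k (k>=2)   *)

Record cdata := CData {
  CC : nat -> group;
  dd : forall k, CC k.+1 -> CC k;
  act : forall k, CC k -> CC 1 -> CC k }.

Arguments dd {c k} x.
Arguments act {c k} x a.

Definition is_rcc (n : nat) (C : cdata) : Prop :=
  (forall k, 1 <= k < n -> hom (@dd C k)) /\
  (forall k, 2 <= k <= n ->
     (forall x, act x gone = x :> CC C k) /\
     (forall x a b, act (act x a) b = act x (a *g b) :> CC C k) /\
     (forall x y a, act (x *g y) a = act x a *g act y a :> CC C k)) /\
  (2 <= n ->
     (forall (x : CC C 2) a, dd (act x a) = ginv a *g dd x *g a) /\
     (forall (x y : CC C 2), act x (dd y) = ginv y *g x *g y)) /\
  (forall k, 3 <= k <= n -> forall x y : CC C k, x *g y = y *g x) /\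
  (forall k, 2 <= k < n -> forall (x : CC C k.+1) a,
      dd (act x a) = act (dd x) a) /\
  (forall k, 1 <= k -> k.+2 <= n -> forall x : CC C k.+2,
      dd (dd x) = gone) /\
  (forall k, 3 <= k <= n -> forall (x : CC C k) (y : CC C 2),
      act x (dd y) = x).

Definition cmap (C D : cdata) := forall k, CC C k -> CC D k.

Definition is_morph (n : nat) (C D : cdata) (h : cmap C D) : Prop :=
  (forall k, 1 <= k <= n -> hom (h k)) /\
  (forall k, 1 <= k < n -> forall x : CC C k.+1, h k (dd x) = dd (h k.+1 x)) /\
  (forall k, 2 <= k <= n -> forall (x : CC C k) a,
      h k (act x a) = act (h k x) (h 1 a)).

(* h induces isomorphisms on pi_1 = C_1/im d_2,
   pi_k = ker d_k / im d_{k+1} (2 <= k <= n-1), pi_n = ker d_n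
   (bijectivity of the induced homomorphisms, written out). *)
Definition pi_iso (n : nat) (C D : cdata) (h : cmap C D) : Prop :=
  ((forall y : CC D 1, exists (x : CC C 1) (z : CC D 2), h 1 x = y *g dd z) /\
   (forall x : CC C 1, (exists z : CC D 2, h 1 x = dd z) ->
                       exists w : CC C 2, x = dd w)) /\
  (forall j, 1 <= j -> j.+2 <= n ->
     (forall x : CC C j.+1, dd x = gone ->
        (exists z : CC D j.+2, h j.+1 x = dd z) ->
        exists w : CC C j.+2, x = dd w) /\
     (forall y : CC D j.+1, dd y = gone ->
        exists x : CC C j.+1, dd x = gone /\
          exists z : CC D j.+2, h j.+1 x = y *g dd z)) /\
  (forall j, j.+1 = n ->
     (forall x : CC C j.+1, dd x = gone -> h j.+1 x = gone -> x = gone) /\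
     (forall y : CC D j.+1, dd y = gone ->
        exists x : CC C j.+1, dd x = gone /\ h j.+1 x = y)).

Definition weak_equiv (n : nat) (C D : cdata) (h : cmap C D) : Prop :=
  is_morph n C D h /\ pi_iso n C D h.

Definition fibration (n : nat) (C D : cdata) (h : cmap C D) : Prop :=
  is_morph n C D h /\
  (forall k, 1 <= k <= n -> forall y : CC D k, exists x, h k x = y).

Definition trivial_fibration (n : nat) (C D : cdata) (h : cmap C D) : Prop :=
  fibration n C D h /\ weak_equiv n C D h.

(* cofibrant: left lifting property against all trivial fibrations
   (i.e. the morphism from the initial object has the LLP). *)
Definition cofibrant (n : nat) (Q : cdata) : Prop :=
  forall X Y : cdata, is_rcc n X -> is_rcc n Y ->
  forall t : cmap X Y, trivial_fibration n X Y t ->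
  forall g : cmap Q Y, is_morph n Q Y g ->
  exists h : cmap Q X, is_morph n Q X h /\
    (forall k, 1 <= k <= n -> forall x : CC Q k, t k (h k x) = g k x).

(* surjectivity of u_k : E_k -> ker eta_{k-1} x_{ker d_{k-1}} H_k,
   u_k(x) = (eta_k x, p_k x); conventions ker eta_1 = E_1,
   ker eta_0 = ker d_0 = 1, ker d_1 = H_1. *)
Definition u_surj (E H : cdata) (p : cmap E H) (k : nat) : Prop :=
  match k with
  | 0 => True
  | 1 => forall h : CC H 1, exists x : CC E 1, p 1 x = h
  | i.+2 => forall (e : CC E i.+1) (h : CC H i.+2),
      (0 < i -> dd e = gone) -> p i.+1 e = dd h ->
      exists x : CC E i.+2, dd x = e /\ p i.+2 x = h
  end.

(* n-butterfly with n = m+2 *)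
Definition butterfly_aux (m : nat) (H G E : cdata) (p : cmap E H) (f : cmap E G)
    (alpha : CC H m.+2 -> CC E m.+1) (beta : CC G m.+2 -> CC E m.+1) : Prop :=
  is_rcc m.+1 E /\ is_morph m.+1 E H p /\ is_morph m.+1 E G f /\
  hom alpha /\ hom beta /\
  (forall h, p m.+1 (alpha h) = dd h) /\
  (forall g, f m.+1 (beta g) = dd g) /\
  ((forall g, beta g = gone -> g = gone) /\
   (forall g, dd (beta g) = gone /\ p m.+1 (beta g) = gone) /\
   (forall x : CC E m.+1, dd x = gone -> p m.+1 x = gone ->
       exists g, x = beta g) /\
   u_surj E H p m.+1 /\
   (forall k, 1 <= k <= m -> u_surj E H p k)) /\
  (forall h g, dd (alpha h *g beta g) = gone) /\
  (forall h, f m.+1 (alpha h) = gone) /\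
  (forall h a, alpha (act h (p 1 a)) = act (alpha h) a) /\
  (forall g a, beta (act g (f 1 a)) = act (beta g) a).

Definition butterfly (n : nat) (H G E : cdata) (p : cmap E H) (f : cmap E G)
    (alpha : CC H n -> CC E n.-1) (beta : CC G n -> CC E n.-1) : Prop :=
  match n as n0 return (CC H n0 -> CC E n0.-1) -> (CC G n0 -> CC E n0.-1) -> Prop with
  | m.+2 => fun a b => butterfly_aux m H G E p f a b
  | _ => fun _ _ => False
  end alpha beta.

Definition tcast (F : nat -> group) (i j : nat) (e : i = j) (x : F i) : F j :=
  eq_rect i (fun k => gcar (F k)) x j e.

Definition rtb (n k : nat) : bool := (1 < k) && (k == n).

Lemma rt_eq (n k : nat) : rtb n k = true -> n = k.
Proof. by case/andP=> _ /eqP ->. Qed.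

Lemma rt_top (n k : nat) : rtb n k.+1 = true -> n.-1 = k.
Proof. by move/rt_eq->. Qed.

(* carrier: T in degree n, C_k otherwise (degree 1 is definitionally C_1) *)
Definition rcar (n : nat) (C : cdata) (T : group) (k : nat) : group :=
  if rtb n k then T else CC C k.

Definition rd (n : nat) (C : cdata) (T : group) (t : T -> CC C n.-1) (k : nat) :
    rcar n C T k.+1 -> rcar n C T k :=
  match rtb n k.+1 as c
        return rtb n k.+1 = c -> (if c then T else CC C k.+1) -> rcar n C T k with
  | true => fun e x =>
      match rtb n k as c0 return (if c0 then T else CC C k) with
      | true => x
      | false => tcast (CC C) _ _ (rt_top n k e) (t x)
      end
  | false => fun _ x =>
      match rtb n k as c0 return (if c0 then T else CC C k) with
      | true => gone
      | false => dd x
      end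
  end (erefl _).

Definition ract (n : nat) (C : cdata) (T : group) (tact : T -> CC C 1 -> T)
    (k : nat) (x : rcar n C T k) (a : CC C 1) : rcar n C T k :=
  (match rtb n k as c return (if c then T else CC C k) -> (if c then T else CC C k) with
   | true => fun y => tact y a
   | false => fun y => act y a
   end) x.

Definition replace_top (n : nat) (C : cdata) (T : group) (t : T -> CC C n.-1)
    (tact : T -> CC C 1 -> T) : cdata :=
  @CData (rcar n C T) (rd n C T t) (ract n C T tact).

Definition rmap (n : nat) (C D : cdata) (T : group) (proj : T -> CC D n)
    (p : cmap C D) (k : nat) : rcar n C T k -> CC D k :=
  match rtb n k as c return rtb n k = c -> (if c then T else CC C k) -> CC D k with
  | true => fun e x => tcast (CC D) _ _ (rt_eq n k e) (proj x)
  | false => fun _ x => p k x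
  end (erefl _).

(* E^* : H_n x G_n --(alpha x beta)--> E_{n-1} --> ... --> E_1,
   with E_1 acting on H_n x G_n through p_1 and f_1. *)
Definition Estar (n : nat) (H G E : cdata) (p : cmap E H) (f : cmap E G)
    (alpha : CC H n -> CC E n.-1) (beta : CC G n -> CC E n.-1) : cdata :=
  replace_top n E (prodg (CC H n) (CC G n))
    (fun x => alpha x.1 *g beta x.2)
    (fun x a => (act x.1 (p 1 a), act x.2 (f 1 a))).

Definition pstar (n : nat) (H G E : cdata) (p : cmap E H) (f : cmap E G)
    (alpha : CC H n -> CC E n.-1) (beta : CC G n -> CC E n.-1) :
    cmap (Estar n H G E p f alpha beta) H :=
  rmap n E H (prodg (CC H n) (CC G n)) (fun x => x.1) p.

(* [E^*] is a reduced [n]-crossed complex because [beta G_n] is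
   central in [E_(n-1)] (a cycle of a crossed complex is central), and
   [p^* : E^* -> H] is a trivial fibration.  It is degreewise surjective because
   the maps [u_k] of (B2) are.  Below degree [n - 1], where [E^*] is [E], the
   surjectivity of the [u_k] is what makes [p] bijective on [pi_k]; in degrees [n - 1]
   and [n] the exact sequence [G_n -> E_(n-1) -> ker eta x H_(n-1)] makes
   [(h, g) |-> alpha h * beta g] hit exactly the cycles of [E_(n-1)] over
   boundaries of [H], and a cycle [(1, g)] of [E^*_n] has [beta g = 1], so [g = 1].
   Cofibrancy of [Q] then lifts [q] through [p^*] to [l] with [p^* l = q], and
   [l] is a weak equivalence by two-out-of-three. *)

From Pilot Require Import Defs.
From mathcomp Require Import all_boot zify.

Arguments gmul1g {g} x.
Arguments gmulVg {g} x.
Arguments gmulA {g} x y z.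

Section GroupTheory.
Context {A : group}.
Implicit Types x y z : A.

Lemma gmulKg x y : ginv x *g (x *g y) = y.
Proof. by rewrite gmulA gmulVg gmul1g. Qed.

Lemma gmulI x y z : x *g y = x *g z -> y = z.
Proof. by move=> h; rewrite -(gmulKg x y) h gmulKg. Qed.

Lemma gmulgV x : x *g ginv x = gone.
Proof.
rewrite -(gmul1g (x *g ginv x)) -(gmulVg (ginv x)) -!gmulA.
by rewrite (gmulA (ginv x)) gmulVg gmul1g gmulVg.
Qed.

Lemma gmulg1 x : x *g gone = x.
Proof. by rewrite -(gmulVg x) gmulA gmulgV gmul1g. Qed.

Lemma gmulKVg x y : x *g (ginv x *g y) = y.
Proof. by rewrite gmulA gmulgV gmul1g. Qed.

Lemma gmul_eq1 x y : x *g y = gone -> x = ginv y.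
Proof. by move=> h; rewrite -(gmulg1 x) -(gmulgV y) gmulA h gmul1g. Qed.

Lemma ginv1 : ginv (gone : A) = gone.
Proof. by rewrite -(gmulg1 (ginv gone)) gmulVg. Qed.

End GroupTheory.

Lemma hom1 (A B : group) (h : A -> B) : hom h -> h gone = gone.
Proof. by move=> hh; apply: (gmulI (h gone)); rewrite -hh gmul1g gmulg1. Qed.

Lemma homV (A B : group) (h : A -> B) : hom h -> forall x, h (ginv x) = ginv (h x).
Proof. by move=> hh x; apply: gmul_eq1; rewrite -hh gmulVg hom1. Qed.

Arguments hom1 {A B h} _.
Arguments homV {A B h} _ x.

Section TwoOutOfThree.
Context {n : nat} {Q X Y : cdata} {l : cmap Q X} {pp : cmap X Y} {q : cmap Q Y}.
Hypotheses (hn : 2 <= n) (hX : is_rcc n X)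
  (hl : is_morph n Q X l) (hp : is_morph n X Y pp)
  (hpi : pi_iso n X Y pp) (hqi : pi_iso n Q Y q)
  (hlq : forall k, 1 <= k <= n -> forall x, pp k (l k x) = q k x).

Lemma pp_dd_cycle {j} {y : CC X j.+1} :
  1 <= j -> j.+1 <= n -> dd y = gone -> dd (pp j.+1 y) = gone.
Proof.
have [hpm [hpd _]] := hp.
by move=> j1 j2 dy; rewrite -hpd ?dy ?(hom1 (hpm j _)) //; lia.
Qed.

Lemma cycle_defect {j} {y : CC X j.+1} {x : CC Q j.+1} :
  1 <= j -> j.+1 <= n -> dd y = gone -> dd x = gone ->
  dd (ginv y *g l j.+1 x) = gone /\
  pp j.+1 (ginv y *g l j.+1 x) = ginv (pp j.+1 y) *g q j.+1 x.
Proof.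
have [hdd _] := hX; have [hlm [hld _]] := hl; have [hpm _] := hp.
move=> j1 j2 dy dx; split.
- rewrite (hdd j) ?(homV (hdd j _)) -?hld ?dx ?dy ?(hom1 (hlm j _)) ?ginv1 ?gmul1g //; lia.
- by rewrite (hpm j.+1) ?(homV (hpm j.+1 _)) ?hlq //; lia.
Qed.

Lemma pi_iso_two_of_three : pi_iso n Q X l.
Proof.
have [hlm [hld _]] := hl; have [hpm [hpd _]] := hp.
have [[p1s p1i] [pks pn]] := hpi; have [[q1s q1i] [qks qn]] := hqi.
split; [split|split].
- move=> y; have [x [z hz]] := q1s (pp 1 y).
  have pw : pp 1 (ginv y *g l 1 x) = dd z.
    by rewrite (hpm 1) ?(homV (hpm 1 _)) ?hlq ?hz ?gmulKg //; lia.
  have [w hw] := p1i _ (ex_intro _ z pw).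
  by exists x, w; rewrite -hw gmulKVg.
- move=> x [z hz]; apply: q1i; exists (pp 2 z).
  by rewrite -hlq ?hz ?hpd //; lia.
- move=> j j1 j2; have [pinj _] := pks j j1 j2; have [qinj qsurj] := qks j j1 j2.
  split.
  + move=> x dx [z hz]; apply: qinj dx _; exists (pp j.+2 z).
    by rewrite -hlq ?hz ?hpd //; lia.
  + move=> y dy.
    have [x [dx [z hz]]] := qsurj _ (pp_dd_cycle j1 (ltnW j2) dy).
    have [dw pw] := cycle_defect j1 (ltnW j2) dy dx.
    rewrite hz gmulKg in pw.
    have [w hw] := pinj _ dw (ex_intro _ z pw).
    by exists x; split => //; exists w; rewrite -hw gmulKVg.
- move=> j hj; have [pinj _] := pn j hj; have [qinj qsurj] := qn j hj.
  have j1 : 1 <= j by lia.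
  split.
  + move=> x dx lx; apply: qinj dx _.
    by rewrite -hlq ?lx ?(hom1 (hpm j.+1 _)) //; lia.
  + move=> y dy.
    have j2 : j.+1 <= n by lia.
    have [x [dx hx]] := qsurj _ (pp_dd_cycle j1 j2 dy).
    have [dw pw] := cycle_defect j1 j2 dy dx.
    rewrite hx gmulVg in pw.
    by exists x; split => //; rewrite -(gmulKVg y (l j.+1 x)) (pinj _ dw pw) gmulg1.
Qed.

End TwoOutOfThree.

Section IfCasts.
Context {Y X : group}.

Definition ifF {b} (e : b = false) (x : X) : if b then Y else X :=
  match esym e in _ = c return if c then Y else X with erefl => x end.
Definition ifT {b} (e : b = true) (y : Y) : if b then Y else X :=
  match esym e in _ = c return if c then Y else X with erefl => y end.

Lemma ifF_ind {b} (e : b = false) (P : (if b then Y else X) -> Prop) :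
  (forall x, P (ifF e x)) -> forall y, P y.
Proof. by move: e P; case: b => // e; rewrite (eq_axiomK e). Qed.
Lemma ifT_ind {b} (e : b = true) (P : (if b then Y else X) -> Prop) :
  (forall x, P (ifT e x)) -> forall y, P y.
Proof. by move: e P; case: b => // e; rewrite (eq_axiomK e). Qed.

Lemma ifF_inj {b} (e : b = false) : injective (ifF e).
Proof. by move: e; case: b => // e; rewrite (eq_axiomK e). Qed.

Lemma ifF_mul {b} (e : b = false) x x' : ifF e (x *g x') = ifF e x *g ifF e x'.
Proof. by move: e; case: b => // e; rewrite (eq_axiomK e). Qed.
Lemma ifT_mul {b} (e : b = true) y y' : ifT e (y *g y') = ifT e y *g ifT e y'.
Proof. by move: e; case: b => // e; rewrite (eq_axiomK e). Qed.

Lemma ifF_one {b} (e : b = false) : ifF e gone = gone.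
Proof. by move: e; case: b => // e; rewrite (eq_axiomK e). Qed.
Lemma ifT_one {b} (e : b = true) : ifT e gone = gone.
Proof. by move: e; case: b => // e; rewrite (eq_axiomK e). Qed.

Lemma ifF_inv {b} (e : b = false) x : ifF e (ginv x) = ginv (ifF e x).
Proof. by move: e; case: b => // e; rewrite (eq_axiomK e). Qed.

Lemma ifF_id (e : false = false) x : ifF e x = x.
Proof. by rewrite (eq_axiomK e). Qed.

End IfCasts.

Arguments ifF_ind {Y X b} e {P} _ y.
Arguments ifT_ind {Y X b} e {P} _ y.

Section ReplaceTop.
Variables (n : nat) (C : cdata) (T : group).

Lemma rd_low (t : T -> CC C n.-1) k (e1 : rtb n k.+1 = false) (e0 : rtb n k = false) x :
  rd n C T t k (ifF e1 x) = ifF e0 (dd x).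
Proof.
rewrite /rd; move: (rt_top n k) e1 x; case: (rtb n k.+1) => // _ e1 x.
rewrite (eq_axiomK e1) /=.
by move: e0; rewrite /rcar; case: (rtb n k) => // e0; rewrite (eq_axiomK e0).
Qed.

Lemma rd_top (t : T -> CC C n.-1) k (e1 : rtb n k.+1 = true) (e0 : rtb n k = false)
    (top : n.-1 = k) y :
  rd n C T t k (ifT e1 y) = ifF e0 (Defs.tcast (CC C) _ _ top (t y)).
Proof.
rewrite /rd; move: (rt_top n k) e1 y; case: (rtb n k.+1) => // top' e1 y.
rewrite (eq_axiomK e1) /= (eq_irrelevance (top' _) top).
by move: e0; rewrite /rcar; case: (rtb n k) => // e0; rewrite (eq_axiomK e0).
Qed.

Lemma ract_low (tact : T -> CC C 1 -> T) k (e : rtb n k = false) x a :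
  ract n C T tact k (ifF e x) a = ifF e (act x a).
Proof.
by rewrite /ract; move: e; rewrite /rcar; case: (rtb n k) => // e; rewrite (eq_axiomK e).
Qed.

Lemma ract_top (tact : T -> CC C 1 -> T) k (e : rtb n k = true) y a :
  ract n C T tact k (ifT e y) a = ifT e (tact y a).
Proof.
by rewrite /ract; move: e; rewrite /rcar; case: (rtb n k) => // e; rewrite (eq_axiomK e).
Qed.

Lemma rmap_low (D : cdata) (proj : T -> CC D n) (p : cmap C D) k (e : rtb n k = false) x :
  rmap n C D T proj p k (ifF e x) = p k x.
Proof.
by rewrite /rmap; move: (rt_eq n k) e x; case: (rtb n k) => // _ e x; rewrite (eq_axiomK e).
Qed.

Lemma rmap_top (D : cdata) (proj : T -> CC D n) (p : cmap C D) (e : rtb n n = true) y :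
  rmap n C D T proj p n (ifT e y) = proj y.
Proof.
rewrite /rmap; move: (rt_eq n n) e y; case: (rtb n n) => // top e y.
by rewrite (eq_axiomK e) /= (eq_axiomK (top _)).
Qed.

End ReplaceTop.

(* For [k = 2] this is the Peiffer identity [z^(dd b) = b^-1 z b]. *)
Lemma rcc_cycle_central {n} {C : cdata} {k} : is_rcc n C -> 1 <= k < n ->
  forall b z : CC C k.+1, dd b = gone -> b *g z = z *g b.
Proof.
move=> [_ [Cact [Ccm [Cab _]]]]; case: k => [|[|k]] // hk b z db.
- have := (Ccm hk).2 z b; rewrite db (proj1 (Cact 2 hk)) => zb.
  by rewrite {1}zb -!gmulA gmulKVg.
- exact: Cab.
Qed.

Lemma rtb_below m k : k < m.+2 -> rtb m.+2 k = false.
Proof. by move=> lt; rewrite /rtb; case: eqP => [eq|]; [lia | rewrite andbF]. Qed.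
Arguments rtb_below {m k} _.

Lemma rtb_top m : rtb m.+2 m.+2 = true.
Proof. by rewrite /rtb eqxx andbT. Qed.

Section Estar.
Context {m : nat} {H G E : cdata} {p : cmap E H} {f : cmap E G}
  {alpha : CC H m.+2 -> CC E m.+1} {beta : CC G m.+2 -> CC E m.+1}.

Local Notation T := (prodg (CC H m.+2) (CC G m.+2)).
Local Notation X := (Estar m.+2 H G E p f alpha beta).
Local Notation ps := (pstar m.+2 H G E p f alpha beta).
(* [E^*_k] is [E_k] for [k < n] and [H_n x G_n] for [k = n], up to the
   boolean [rtb n k]; [inE] and [inT] are the two injections. *)
Local Notation inE e x := (@ifF T (CC E _) _ e x).
Local Notation inT y := (@ifT T (CC E m.+2) _ (rtb_top m) y).
Local Notation inE_ind e := (@ifF_ind T (CC E _) _ e _).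
Local Notation inT_ind := (@ifT_ind T (CC E m.+2) _ (rtb_top m) _).

Lemma Estar_ddL {k} (e1 : rtb m.+2 k.+1 = false) (e0 : rtb m.+2 k = false) x :
  @dd X k (inE e1 x) = inE e0 (dd x).
Proof. exact: rd_low. Qed.

Lemma Estar_ddT (e0 : rtb m.+2 m.+1 = false) y :
  @dd X m.+1 (inT y) = inE e0 (alpha y.1 *g beta y.2).
Proof. exact: (@rd_top m.+2 E T _ m.+1 _ e0 (erefl m.+1)). Qed.

Lemma Estar_actL {k} (e : rtb m.+2 k = false) x a :
  @act X k (inE e x) a = inE e (act x a).
Proof. exact: ract_low. Qed.

Lemma Estar_actT y a :
  @act X m.+2 (inT y) a = inT (act y.1 (p 1 a), act y.2 (f 1 a)).
Proof. exact: ract_top. Qed.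

Lemma pstarL {k} (e : rtb m.+2 k = false) x : ps k (inE e x) = p k x.
Proof. exact: rmap_low. Qed.

Lemma pstarT y : ps m.+2 (inT y) = y.1.
Proof. exact: rmap_top. Qed.

Lemma pstar1 (a : CC X 1) : ps 1 a = p 1 a.
Proof. exact: (@pstarL 1 (erefl false) a). Qed.

Hypotheses (hm : 1 <= m) (hH : is_rcc m.+2 H) (hG : is_rcc m.+2 G)
  (hB : butterfly_aux m H G E p f alpha beta).

Lemma beta_central g (z : CC E m.+1) : beta g *g z = z *g beta g.
Proof.
have [hE [_ [_ [_ [_ [_ [_ [[_ [bker _]] _]]]]]]]] := hB.
by apply: (rcc_cycle_central hE); [lia | exact: (proj1 (bker g))].
Qed.

Ltac unpack_butterfly :=
  have [hE [[phom [pdd pact]] [[fhom [fdd _]] [ahom [bhom [palpha [_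
        [[binj [bker [bex [usurj_top usurj]]]] [dd_ab [_ [alpha_act beta_act]]]]]]]]]]] := hB;
  have [Edh [Eact [Ecm [Eab [Eeq [Edd Etr]]]]]] := hE;
  have [Hdh [Hact [_ [Hab [_ [Hdd Htr]]]]]] := hH;
  have [_ [Gact [_ [Gab [_ [_ Gtr]]]]]] := hG;
  have e1 : rtb m.+2 1 = false by [];
  have e2 : rtb m.+2 2 = false by apply: rtb_below; lia.

Lemma Estar_dd_hom k : 1 <= k < m.+2 -> hom (@dd X k).
Proof.
unpack_butterfly => hk; rewrite /hom.
have [lt|->] : k.+1 < m.+2 \/ k = m.+1 by lia.
- have lt0 : k < m.+2 by lia.
  refine (inE_ind (rtb_below lt) _) => x; refine (inE_ind (rtb_below lt) _) => y.
  by rewrite -ifF_mul !(Estar_ddL (rtb_below lt) (rtb_below lt0)) (Edh k) ?ifF_mul //; lia.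
- refine (inT_ind _) => x; refine (inT_ind _) => y.
  rewrite -ifT_mul !(Estar_ddT (rtb_below (ltnSn _))) -ifF_mul; congr ifF => /=.
  rewrite ahom bhom -!gmulA; congr (_ *g _).
  by rewrite [RHS]gmulA (beta_central x.2 (alpha y.1)) -gmulA.
Qed.

Lemma Estar_act_axioms k : 2 <= k <= m.+2 ->
  (forall x : CC X k, act x gone = x) /\
  (forall (x : CC X k) (a b : CC X 1), act (act x a) b = act x (a *g b)) /\
  (forall (x y : CC X k) (a : CC X 1), act (x *g y) a = act x a *g act y a).
Proof.
unpack_butterfly => hk.
have [lt|->] : k < m.+2 \/ k = m.+2 by lia.
- have [A1 [A2 A3]] := Eact k ltac:(lia).
  split; [|split].
  + by refine (inE_ind (rtb_below lt) _) => x; rewrite Estar_actL A1.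
  + by refine (inE_ind (rtb_below lt) _) => x a b; rewrite !Estar_actL A2.
  + refine (inE_ind (rtb_below lt) _) => x; refine (inE_ind (rtb_below lt) _) => y a.
    by rewrite -ifF_mul !Estar_actL A3 ifF_mul.
- have [A1 [A2 A3]] := Hact m.+2 ltac:(lia).
  have [B1 [B2 B3]] := Gact m.+2 ltac:(lia).
  split; [|split].
  + refine (inT_ind _) => x; rewrite Estar_actT (hom1 (phom 1 _)) ?(hom1 (fhom 1 _)) //.
    by rewrite A1 B1; case: x.
  + refine (inT_ind _) => x a b; rewrite !Estar_actT /= A2 B2.
    by rewrite (phom 1) ?(fhom 1).
  + refine (inT_ind _) => x; refine (inT_ind _) => y a.
    by rewrite -ifT_mul !Estar_actT -ifT_mul /= A3 B3.
Qed.

Lemma Estar_crossed_module :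
  (forall (x : CC X 2) a, dd (act x a) = ginv a *g dd x *g a) /\
  (forall (x y : CC X 2), act x (dd y) = ginv y *g x *g y).
Proof.
unpack_butterfly; have [C1 C2] := Ecm ltac:(lia); split.
- refine (inE_ind e2 _) => x a.
  by rewrite Estar_actL !(Estar_ddL e2 e1) !ifF_id C1.
- refine (inE_ind e2 _) => x; refine (inE_ind e2 _) => y.
  by rewrite (Estar_ddL e2 e1) ifF_id Estar_actL -!ifF_inv -!ifF_mul C2.
Qed.

Lemma Estar_abelian k : 3 <= k <= m.+2 -> forall x y : CC X k, x *g y = y *g x.
Proof.
unpack_butterfly => hk.
have [lt|->] : k < m.+2 \/ k = m.+2 by lia.
- refine (inE_ind (rtb_below lt) _) => x; refine (inE_ind (rtb_below lt) _) => y.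
  by rewrite -!ifF_mul (Eab k _ x y) //; lia.
- refine (inT_ind _) => x; refine (inT_ind _) => y.
  rewrite -!ifT_mul; congr ifT; rewrite /= /prodg_mul.
  by congr (_, _); [apply: Hab | apply: Gab]; lia.
Qed.

Lemma Estar_dd_act k : 2 <= k < m.+2 -> forall (x : CC X k.+1) a,
  dd (act x a) = act (dd x) a.
Proof.
unpack_butterfly => hk.
have [lt|->] : k.+1 < m.+2 \/ k = m.+1 by lia.
- have lt0 : k < m.+2 by lia.
  refine (inE_ind (rtb_below lt) _) => x a.
  by rewrite Estar_actL !(Estar_ddL (rtb_below lt) (rtb_below lt0)) Estar_actL Eeq //; lia.
- refine (inT_ind _) => x a.
  rewrite Estar_actT !(Estar_ddT (rtb_below (ltnSn _))) Estar_actL /= alpha_act beta_act.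
  by have [_ [_ A3]] := Eact m.+1 ltac:(lia); rewrite A3.
Qed.

Lemma Estar_dd_dd k : 1 <= k -> k.+2 <= m.+2 -> forall x : CC X k.+2,
  dd (dd x) = gone.
Proof.
unpack_butterfly => hk1 hk2.
have lt1 : k.+1 < m.+2 by lia.
have lt0 : k < m.+2 by lia.
have [lt|km] : k.+2 < m.+2 \/ k = m by lia.
- refine (inE_ind (rtb_below lt) _) => x.
  rewrite (Estar_ddL (rtb_below lt) (rtb_below lt1)) (Estar_ddL (rtb_below lt1) (rtb_below lt0)).
  by rewrite Edd ?ifF_one //; lia.
- subst k; refine (inT_ind _) => x.
  by rewrite (Estar_ddT (rtb_below lt1)) (Estar_ddL (rtb_below lt1) (rtb_below lt0)) dd_ab ifF_one.
Qed.

Lemma Estar_act_dd2 k : 3 <= k <= m.+2 -> forall (x : CC X k) (y : CC X 2),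
  act x (dd y) = x.
Proof.
unpack_butterfly => hk x; refine (inE_ind e2 _) => y.
rewrite (Estar_ddL e2 e1) ifF_id.
have [lt|eq] : k < m.+2 \/ k = m.+2 by lia.
- move: x; refine (inE_ind (rtb_below lt) _) => x.
  by rewrite Estar_actL Etr //; lia.
- subst k; move: x; refine (inT_ind _) => x.
  rewrite Estar_actT (pdd 1) ?(fdd 1) ?(Htr m.+2) ?(Gtr m.+2) //.
  by case: x.
Qed.

Lemma Estar_rcc : is_rcc m.+2 X.
Proof.
split; first exact: Estar_dd_hom.
split; first exact: Estar_act_axioms.
split; first by move=> _; exact: Estar_crossed_module.
split; first exact: Estar_abelian.
split; first exact: Estar_dd_act.
split; first exact: Estar_dd_dd.
exact: Estar_act_dd2.
Qed.

Lemma butterfly_u_surj k : 1 <= k <= m.+1 -> u_surj E H p k.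
Proof.
unpack_butterfly => hk.
have [le|->] : k <= m \/ k = m.+1 by lia.
- by apply: usurj; lia.
- exact: usurj_top.
Qed.

Lemma butterfly_p_surj k : 1 <= k <= m.+1 -> forall h : CC H k, exists x, p k x = h.
Proof.
unpack_butterfly.
case: k => [|[|i]] hk //; first exact: (butterfly_u_surj 1).
move=> h; have U := butterfly_u_surj _ hk.
have [e [de pe]] : exists e : CC E i.+1, (0 < i -> dd e = gone) /\ p i.+1 e = dd h.
  case: i hk U h => [|i] hk U h.
    by have [e he] := butterfly_u_surj 1 isT (dd h); exists e.
  have one_cycle : 0 < i -> dd (gone : CC E i.+1) = gone.
    by move=> i0; apply: hom1; apply: Edh; lia.
  have p_one : p i.+1 gone = dd (dd h).
    by rewrite (hom1 (phom i.+1 _)) ?(Hdd i.+1) //; lia.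
  have [x [dx px]] := butterfly_u_surj i.+2 ltac:(lia) gone (dd h) one_cycle p_one.
  by exists x.
by have [x [_ px]] := U e h de pe; exists x.
Qed.

Lemma pstar_morph : is_morph m.+2 X H ps.
Proof.
unpack_butterfly; split; [|split].
- move=> k hk; rewrite /hom.
  have [lt|->] : k < m.+2 \/ k = m.+2 by lia.
  + refine (inE_ind (rtb_below lt) _) => x; refine (inE_ind (rtb_below lt) _) => y.
    by rewrite -ifF_mul !pstarL (phom k) //; lia.
  + refine (inT_ind _) => x; refine (inT_ind _) => y.
    by rewrite -ifT_mul !pstarT.
- move=> k hk.
  have [lt|->] : k.+1 < m.+2 \/ k = m.+1 by lia.
  + have lt0 : k < m.+2 by lia.
    refine (inE_ind (rtb_below lt) _) => x.
    by rewrite (Estar_ddL (rtb_below lt) (rtb_below lt0)) !pstarL pdd //; lia.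
  + refine (inT_ind _) => x.
    rewrite (Estar_ddT (rtb_below (ltnSn _))) pstarL pstarT (phom m.+1 ltac:(lia)).
    by rewrite palpha (proj2 (bker _)) gmulg1.
- move=> k hk.
  have [lt|->] : k < m.+2 \/ k = m.+2 by lia.
  + refine (inE_ind (rtb_below lt) _) => x a.
    by rewrite Estar_actL !pstarL pstar1 pact //; lia.
  + refine (inT_ind _) => x a.
    by rewrite Estar_actT !pstarT pstar1.
Qed.

Lemma pstar_surj k : 1 <= k <= m.+2 -> forall y : CC H k, exists x, ps k x = y.
Proof.
move=> hk; have [lt|->] : k < m.+2 \/ k = m.+2 by lia.
- move=> y; have [x px] := butterfly_p_surj k ltac:(lia) y.
  by exists (inE (rtb_below lt) x); rewrite pstarL.
- by move=> y; exists (inT (y, gone)); rewrite pstarT.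
Qed.

Lemma dd_alpha h : dd (alpha h) = gone.
Proof. by unpack_butterfly; have := dd_ab h gone; rewrite (hom1 bhom) gmulg1. Qed.

Lemma pstar_pi1 :
  (forall y : CC H 1, exists (x : CC X 1) (z : CC H 2), ps 1 x = y *g dd z) /\
  (forall x : CC X 1, (exists z : CC H 2, ps 1 x = dd z) ->
                      exists w : CC X 2, x = dd w).
Proof.
unpack_butterfly; split.
- move=> y; have [x px] := butterfly_p_surj 1 isT y.
  by exists x, gone; rewrite pstar1 px (hom1 (Hdh 1 isT)) gmulg1.
- move=> x [z pz]; rewrite pstar1 in pz.
  have [w [dw _]] := butterfly_u_surj 2 ltac:(lia) x z (fun i0 => False_ind _ (notF i0)) pz.
  by exists (inE e2 w); rewrite (Estar_ddL e2 e1) dw ifF_id.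
Qed.

Lemma pstar_pi_mid j : 1 <= j -> j.+2 <= m.+2 ->
  (forall x : CC X j.+1, dd x = gone ->
     (exists z : CC H j.+2, ps j.+1 x = dd z) -> exists w : CC X j.+2, x = dd w) /\
  (forall y : CC H j.+1, dd y = gone ->
     exists x : CC X j.+1, dd x = gone /\ exists z : CC H j.+2, ps j.+1 x = y *g dd z).
Proof.
unpack_butterfly => j1 j2.
have lt : j.+1 < m.+2 by lia.
have lt0 : j < m.+2 by lia.
split.
- refine (inE_ind (rtb_below lt) _) => x.
  rewrite (Estar_ddL (rtb_below lt) (rtb_below lt0)) pstarL -(ifF_one (rtb_below lt0)).
  move=> /ifF_inj dx [z pz].
  have [lt2|jm] : j.+2 < m.+2 \/ j = m by lia.
  + have [w [dw _]] := butterfly_u_surj j.+2 ltac:(lia) x z (fun _ => dx) pz.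
    by exists (inE (rtb_below lt2) w); rewrite (Estar_ddL (rtb_below lt2) (rtb_below lt)) dw.
  + subst j.
    (* By exactness in (B2), [ker u_(n-1) = beta G_n] contains [(alpha z)^-1 * x]. *)
    have [g hg] : exists g, ginv (alpha z) *g x = beta g.
      apply: bex.
      - by rewrite (Edh m) ?(homV (Edh m _)) ?dd_alpha ?dx ?ginv1 ?gmul1g //; lia.
      - by rewrite (phom m.+1) ?(homV (phom m.+1 _)) ?palpha ?pz ?gmulVg //; lia.
    by exists (inT (z, g)); rewrite (Estar_ddT (rtb_below lt)) /= -hg gmulKVg.
- move=> y dy; case: j j1 j2 lt lt0 y dy => [|i] // j1 j2 lt lt0 y dy.
  have one_cycle : 0 < i -> dd (gone : CC E i.+1) = gone.
    by move=> i0; apply: hom1; apply: Edh; lia.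
  have p_one : p i.+1 gone = dd y by rewrite dy (hom1 (phom i.+1 _)) //; lia.
  have [x [dx px]] := butterfly_u_surj i.+2 ltac:(lia) gone y one_cycle p_one.
  exists (inE (rtb_below lt) x); split.
  + by rewrite (Estar_ddL (rtb_below lt) (rtb_below lt0)) dx ifF_one.
  + by exists gone; rewrite pstarL px (hom1 (Hdh i.+2 _)) ?gmulg1 //; lia.
Qed.

Lemma pstar_pi_top j : j.+1 = m.+2 ->
  (forall x : CC X j.+1, dd x = gone -> ps j.+1 x = gone -> x = gone) /\
  (forall y : CC H j.+1, dd y = gone ->
     exists x : CC X j.+1, dd x = gone /\ ps j.+1 x = y).
Proof.
unpack_butterfly; case=> ->; split.
- refine (inT_ind _) => -[y g].
  rewrite (Estar_ddT (rtb_below (ltnSn _))) pstarT /= => dyg y1.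
  rewrite y1 (hom1 ahom) gmul1g -(ifF_one (rtb_below (ltnSn _))) in dyg.
  by rewrite (binj _ (ifF_inj _ _ _ dyg)) y1 ifT_one.
- move=> y dy.
  have [g hg] : exists g, alpha y = beta g by apply: bex; rewrite ?dd_alpha ?palpha ?dy.
  exists (inT (y, ginv g)); split; last by rewrite pstarT.
  by rewrite (Estar_ddT (rtb_below (ltnSn _))) /= hg (homV bhom) gmulgV ifF_one.
Qed.

Lemma pstar_trivial_fibration : trivial_fibration m.+2 X H ps.
Proof.
split; first by split; [exact: pstar_morph | exact: pstar_surj].
split; first exact: pstar_morph.
by split; [exact: pstar_pi1 | split; [exact: pstar_pi_mid | exact: pstar_pi_top]].
Qed.

End Estar.

Theorem mainTheorem5 (n : nat) (hn : 3 <= n)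
    (H G : cdata) (hH : is_rcc n H) (hG : is_rcc n G)
    (E : cdata) (p : cmap E H) (f : cmap E G)
    (alpha : CC H n -> CC E n.-1) (beta : CC G n -> CC E n.-1)
    (hB : butterfly n H G E p f alpha beta)
    (Q : cdata) (q : cmap Q H)
    (hQ : is_rcc n Q) (hQc : cofibrant n Q) (hq : trivial_fibration n Q H q) :
  exists l : cmap Q (Estar n H G E p f alpha beta),
    weak_equiv n Q (Estar n H G E p f alpha beta) l /\
    (forall k, 1 <= k <= n -> forall x : CC Q k,
        pstar n H G E p f alpha beta k (l k x) = q k x).
Proof.
case: n hn hH hG alpha beta hB hQ hQc hq => [|[|m]] // hn hH hG alpha beta hB _ hQc hq.
have hm : 1 <= m by lia.
have hX := Estar_rcc hm hH hG hB.
have hps := pstar_trivial_fibration hm hH hG hB.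
have [[hqm _] [_ hqpi]] := hq.
have [l [hlm hlq]] := hQc _ _ hX hH _ hps q hqm.
have [[hpm _] [_ hppi]] := hps.
exists l; split=> //; split=> //.
exact: (pi_iso_two_of_three _ hX hlm hpm hppi hqpi hlq).
Qed.
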